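(* Let $p\geq 0$ be an integer, $T$ a tree, $H$ a connected graph with at least $p$ vertices, and $V\subseteq V(T(H))$ with $|OC(T,V)|\geq p$ and $V(T)\setminus OC(T,V)\neq\emptyset$. Then $T(H)$ has a matching of size $p$ each of whose edges has one end in $V$ and the other end outside $V$.
   Context: Graph $T(H)$: for a tree $T$ and a graph $H$ with $V(H)=\{1,\dots,m\}$, $T(H)$ has vertices $v^i$ ($v\in V(T)$, $1\le i\le m$); for each $v$, $v^1,\dots,v^m$ span a copy $H^v$ of $H$; and $u^iv^i$ is an edge for each $i$ whenever $uv\in E(T)$. $OC(T,V)=\{u\in V(T): V(H^u)\cap V\neq\emptyset\}$. *)

From mathcomp Require Import all_boot.
Set Implicit Arguments. Unset Strict Implicit. Unset Printing Implicit Defensive.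

Definition simple_graph (V : finType) (e : rel V) : Prop :=
  symmetric e /\ irreflexive e.

Definition connected_graph (V : finType) (e : rel V) : Prop :=
  forall x y : V, connect e x y.

Definition acyclic_graph (V : finType) (e : rel V) : Prop :=
  forall s : seq V, cycle e s -> uniq s -> size s < 3.

Definition is_tree (V : finType) (e : rel V) : Prop :=
  [/\ simple_graph e, connected_graph e & acyclic_graph e].

(* The graph T(H) on vertex set V(T) x V(H): vertex (v,i) is v^i. *)
Definition TH_edge (T H : finType) (eT : rel T) (eH : rel H) : rel (T * H) :=
  fun x y => ((x.1 == y.1) && eH x.2 y.2) || ((x.2 == y.2) && eT x.1 y.1).

Definition OC (T H : finType) (V : {set T * H}) : {set T} :=
  [set u | [exists i : H, (u, i) \in V]].

Definition is_matching (X : finType) (e : rel X) (M : seq (X * X)) : Prop :=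
  all (fun xy => e xy.1 xy.2) M /\ uniq (map fst M ++ map snd M).

From mathcomp Require Import all_boot zify.

Set Implicit Arguments.
Unset Strict Implicit.
Unset Printing Implicit Defensive.

(* Let L be the set of layers i such that the copy {v^i : v in V(T)} of T
   meets V.  A vertex w of T outside OC(T,V) leaves every layer partly
   outside V.  If |L| >= p, connectivity of T gives an edge of each of p
   layers in L with exactly its first end in V.  Otherwise |L| < p <= |H|,
   so some layer j misses V; then every copy H^u with u in OC(T,V) meets V
   and contains u^j outside V, and connectivity of H gives such an edge in
   each of p of these copies.  Edges lying in distinct layers (resp. copies)
   are disjoint, so they form a matching. *)

Lemma connect_cross (X : finType) (e : rel X) (P : pred X) x y :
  connect e x y -> P x -> ~~ P y -> exists a b, [&& e a b, P a & ~~ P b].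
Proof.
move=> /connectP [q] + -> {y}.
elim: q x => [|z q IH] x /=; first by move=> _ ->.
case/andP=> exz zq Px; case Pz: (P z); first exact: IH.
by exists x, z; rewrite exz Px Pz.
Qed.

Section FibreCrossing.

Variables (X I : finType) (e : rel X) (V : {set X}) (g : X -> I).

Definition fibre_crossing (xy : X * X) : bool :=
  [&& e xy.1 xy.2, xy.1 \in V, xy.2 \notin V & g xy.1 == g xy.2].

Lemma connect_fibre_crossing (A : finType) (eA : rel A) (h : A -> X) i a b :
  {homo h : x y / eA x y >-> e x y} -> (forall x, g (h x) = i) ->
  connect eA a b -> h a \in V -> h b \notin V ->
  exists2 xy, fibre_crossing xy & g xy.1 == i.
Proof.
move=> hom gh ab ha hb.
have [x [y /and3P [xy hx hy]]] := connect_cross (P := fun x => h x \in V) ab ha hb.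
by exists (h x, h y); rewrite /fibre_crossing /= ?gh ?hom ?hx ?hy ?eqxx.
Qed.

Lemma fibre_crossings_matching (M : seq (X * X)) :
  all fibre_crossing M -> uniq (map (g \o fst) M) ->
  is_matching e M /\ all (fun xy => (xy.1 \in V) && (xy.2 \notin V)) M.
Proof.
move=> /allP crossM uniqM.
have [eM inM outM] : [/\ all (fun xy => e xy.1 xy.2) M,
    {in M, forall xy, xy.1 \in V} & {in M, forall xy, xy.2 \notin V}].
  by split; [apply/allP|..] => xy /crossM /and4P[].
have fibresM : map (g \o fst) M = map (g \o snd) M.
  by apply/eq_in_map => xy /crossM /and4P[_ _ _ /eqP].
split; last by apply/allP => xy xyM; rewrite inM ?outM.
have uniq_snd := uniqM; rewrite fibresM map_comp in uniq_snd.
rewrite map_comp in uniqM.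
split=> //; rewrite cat_uniq (map_uniq uniqM) (map_uniq uniq_snd) andbT.
apply/hasPn => _ /mapP [xy xyM ->]; apply/mapP => -[xy' /inM + eq_xy].
by rewrite -eq_xy (negPf (outM xy xyM)).
Qed.

Lemma fibre_crossings_exist (s : seq I) :
  {in s, forall i, exists2 xy, fibre_crossing xy & g xy.1 == i} ->
  exists2 M, all fibre_crossing M & map (g \o fst) M = s.
Proof.
elim: s => [|i s IH] crossing_s; first by exists [::].
have [xy xy_cross /eqP gxy] := crossing_s i (mem_head i s).
have [M M_cross gM] : exists2 M, all fibre_crossing M & map (g \o fst) M = s.
  by apply: IH => j js; apply: crossing_s; rewrite inE js orbT.
by exists (xy :: M); rewrite /= ?xy_cross ?gxy ?gM.
Qed.

Lemma fibre_crossing_matching (S : {set I}) (k : nat) :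
  k <= #|S| -> {in S, forall i, exists2 xy, fibre_crossing xy & g xy.1 == i} ->
  exists M : seq (X * X), [/\ is_matching e M, size M = k &
    all (fun xy => (xy.1 \in V) && (xy.2 \notin V)) M].
Proof.
move=> kS crossing_S; pose s := take k (enum S).
have [M M_cross gM] : exists2 M, all fibre_crossing M & map (g \o fst) M = s.
  by apply: fibre_crossings_exist => i /mem_take; rewrite mem_enum; apply: crossing_S.
have uniq_s : uniq (map (g \o fst) M) by rewrite gM take_uniq ?enum_uniq.
have [matchM crossM] := fibre_crossings_matching M_cross uniq_s.
by exists M; rewrite -(size_map (g \o fst)) gM size_takel -?cardE.
Qed.

End FibreCrossing.

Lemma TH_edge_layer (T H : finType) (eT : rel T) (eH : rel H) (i : H) :
  {homo (fun v => (v, i)) : u v / eT u v >-> TH_edge eT eH u v}.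
Proof. by move=> u v uv; rewrite /TH_edge /= eqxx uv orbT. Qed.

Lemma TH_edge_copy (T H : finType) (eT : rel T) (eH : rel H) (u : T) :
  {homo pair u : a b / eH a b >-> TH_edge eT eH a b}.
Proof. by move=> a b ab; rewrite /TH_edge /= eqxx ab. Qed.

Theorem lemma7 (p : nat) (T H : finType) (eT : rel T) (eH : rel H)
  (V : {set T * H}) :
  is_tree eT -> simple_graph eH -> connected_graph eH ->
  p <= #|H| -> p <= #|OC V| -> OC V != [set: T] ->
  exists M : seq ((T * H) * (T * H)),
    [/\ is_matching (TH_edge eT eH) M, size M = p &
        all (fun xy => (xy.1 \in V) && (xy.2 \notin V)) M].
Proof.
move=> [_ connT _] _ connH pH pOC.
rewrite -subTset => /subsetPn [w _ wOC].
have wV i : (w, i) \notin V.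
  by apply: contra wOC => wiV; rewrite inE; apply/existsP; exists i.
pose L := [set i : H | [exists u, (u, i) \in V]].
have [pL | Lp] := leqP p #|L|.
  apply: (fibre_crossing_matching (g := snd) pL) => i /[!inE] /existsP [u uiV].
  exact: (connect_fibre_crossing (g := snd) (TH_edge_layer eH i) (fun=> erefl)
    (connT u w) uiV (wV i)).
have [j jL] : exists j, j \notin L.
  have : 0 < #|~: L| by move: pH; rewrite -(cardsC L); lia.
  by case/card_gt0P => j; rewrite inE; exists j.
apply: (fibre_crossing_matching (g := fst) pOC) => u /[!inE] /existsP [a uaV].
have ujV : (u, j) \notin V.
  by apply: contra jL => ujV; rewrite inE; apply/existsP; exists u.
exact: (connect_fibre_crossing (g := fst) (TH_edge_copy eT u) (fun=> erefl)
  (connH a j) uaV ujV).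
Qed.
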